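(* Let $R$ be a Lucas rod set $[1^s,2^t]$ or $[\bar1^s,2^t]$. For each of the following pairs of positive integers $a<b$ there exist a finite rod set $Q$ and a rod set $S$ of shape $\langle a,b\rangle$ with $R\xrightarrow{Q}S$, and $S$ is unique up to equivalence: (1) $b=a+1$, for any $a\ge1$; (2) $b=a+2$, when $s=1$ or $a$ is even; (3) $a=kd$, $b=(k+1)d$, for any integers $d\ge3$ and $k\ge1$.
   Context: A rod is a triple $(r,c,\varepsilon)$ with $r$ a positive integer (length), $c$ a tag (color), $\varepsilon\in\{\pm1\}$ (sign); antirods have sign $-1$. A rod set is a set of rods with finitely many of each length. A Lucas rod set is $[1^s,2^t]$ ($s$ positive rods of length 1, $t$ positive rods of length 2) or $[\bar1^s,2^t]$ ($s$ antirods of length 1, $t$ positive rods of length 2), with $s,t$ relatively prime positive integers. $C(n,R)$ = (number of positive rods of length $n$) $-$ (number of antirods of length $n$); $R\equiv S$ means $C(n,R)=C(n,S)$ for all $n>0$. A rod set is finite if its reduced equivalent (no rod and antirod of the same length) is finite. The shape of $S$ is the set of lengths $n$ with $C(n,S)\ne0$; shape $\langle a,b\rangle$ means this set is $\{a,b\}$. Unions are disjoint unions; $\overline{Q}$ reverses all signs; $QR$ has one rod per pair $(q,r)\in Q\times R$ of length $\operatorname{len}q+\operatorname{len}r$ and sign $\operatorname{sign}q\operatorname{sign}r$. $R\xrightarrow{Q}S$ means $S\equiv R\cup\overline{Q}\cup QR$. *)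

From mathcomp Require Import all_boot all_order all_algebra.
Set Implicit Arguments. Unset Strict Implicit. Unset Printing Implicit Defensive.
Import Order.TTheory GRing.Theory Num.Theory.

(* A rod set, up to renaming of colours: for each length n >= 1,
   [rpos R n] positive rods and [rneg R n] antirods of length n.
   (The value at index 0 is irrelevant: lengths are positive.) *)
Record rodset := RodSet { rpos : nat -> nat; rneg : nat -> nat }.

Definition C (n : nat) (R : rodset) : int := (rpos R n)%:Z - (rneg R n)%:Z.

Definition rod_equiv (R S : rodset) : Prop :=
  forall n : nat, (0 < n)%N -> C n R = C n S.

Definition rod_union (R S : rodset) : rodset :=
  RodSet (fun n => rpos R n + rpos S n)%N (fun n => rneg R n + rneg S n)%N.

Definition rod_bar (Q : rodset) : rodset := RodSet (rneg Q) (rpos Q).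

(* QR: one rod per pair (q,r), length len q + len r, sign sign q * sign r *)
Definition rod_prod (Q R : rodset) : rodset :=
  RodSet
    (fun n => \sum_(1 <= i < n) (rpos Q i * rpos R (n - i) + rneg Q i * rneg R (n - i)))%N
    (fun n => \sum_(1 <= i < n) (rpos Q i * rneg R (n - i) + rneg Q i * rpos R (n - i)))%N.

(* finite: the reduced equivalent (|C(n,R)| rods of length n) is finite *)
Definition rod_finite (R : rodset) : Prop :=
  exists N : nat, forall n : nat, (N < n)%N -> C n R = 0.

Definition has_shape2 (S : rodset) (a b : nat) : Prop :=
  forall n : nat, (0 < n)%N -> (C n S <> 0 <-> n = a \/ n = b).

Definition rod_step (R Q S : rodset) : Prop :=
  rod_equiv S (rod_union (rod_union R (rod_bar Q)) (rod_prod Q R)).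

(* Lucas rod sets: [1^s,2^t] (anti = false) and [\bar1^s,2^t] (anti = true) *)
Definition lucas (anti : bool) (s t : nat) : rodset :=
  RodSet (fun n => if n == 1%N then (if anti then 0 else s)
                   else if n == 2%N then t else 0)%N
         (fun n => if (n == 1%N) && anti then s else 0)%N.

(* Encode Q by the sequence f with f 0 = 0, f 1 = 1 and f (n+1) = C(n,Q).  For the Lucas rod set
   [e x + t x^2] (e = +-s), the relation R --Q--> S reads
   f (m+2) = e f (m+1) + t f m - C(m+1,S), so when S has shape <a,b> with counts X, Y,
   f = U - X U(. - a) - Y U(. - b), where U is the Lucas sequence U(n+2) = e U(n+1) + t U(n).
   Q is finite iff this combination vanishes eventually.  The Casoratian identity
   U(a+d+1) U(d) - U(a+d) U(d+1) = -(-t)^d U(a) with d = b - a shows that this pins down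
   X = U(b) / U(d) and Y = U(b+1) - X U(d+1), whence uniqueness; existence amounts to
   U(d) | U(b).  This divisibility is trivial when U(d) = +-1 (d = 1, or d = 2 and s = 1), and
   holds whenever d | b because U(d) | U(kd). *)
From mathcomp Require Import all_boot all_order all_algebra.
From mathcomp Require Import ring lra zify.
Set Implicit Arguments. Unset Strict Implicit. Unset Printing Implicit Defensive.
Import Order.TTheory GRing.Theory Num.Theory.
Local Open Scope ring_scope.

Section LucasSequence.

Variables (R : comPzRingType) (e t : R).

Fixpoint lucas_seq (n : nat) : R :=
  match n with
  | 0%N => 0
  | 1%N => 1
  | S (S m as p) => e * lucas_seq p + t * lucas_seq m
  end.

Local Notation U := lucas_seq.

Lemma lucas_seq0 : U 0 = 0. Proof. by []. Qed.
Lemma lucas_seq1 : U 1 = 1. Proof. by []. Qed.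
Lemma lucas_seqSS n : U n.+2 = e * U n.+1 + t * U n. Proof. by []. Qed.

Definition linrec2 (g : nat -> R) (N : nat) : Prop :=
  forall m, (N <= m)%N -> g m.+2 = e * g m.+1 + t * g m.

Lemma linrec2_eq0 g N : linrec2 g N -> g N = 0 -> g N.+1 = 0 ->
  forall n, (N <= n)%N -> g n = 0.
Proof.
move=> hg gN gN1.
have gNk k : g (N + k)%N = 0 /\ g (N + k).+1 = 0.
  elim: k => [|k [h1 h2]]; first by rewrite addn0.
  by rewrite addnS; split=> //; rewrite hg ?leq_addr // h1 h2 !mulr0 addr0.
by move=> n hn; rewrite -(subnKC hn); exact: (gNk _).1.
Qed.

Lemma lucas_seqD m n : U (m + n).+1 = U m.+1 * U n.+1 + t * U m * U n.
Proof.
elim: m n => [|m IH] n; first by rewrite add0n mul1r mulr0 mul0r addr0.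
by rewrite addSn -addnS IH !lucas_seqSS; ring.
Qed.

Lemma lucas_seq_casoratian a d :
  U (a + d).+1 * U d - U (a + d) * U d.+1 = - (- t) ^+ d * U a.
Proof.
elim: d => [|d IH]; first by rewrite addn0 expr0 lucas_seq0 lucas_seq1; ring.
rewrite addnS !lucas_seqSS exprS.
transitivity (- t * (U (a + d).+1 * U d - U (a + d) * U d.+1)); first ring.
by rewrite IH; ring.
Qed.

Definition lucas_shift (a n : nat) : R := U (n - a).

Lemma lucas_shift_rec a m : lucas_shift a m.+2 =
  e * lucas_shift a m.+1 + t * lucas_shift a m + (if m.+1 == a then 1 else 0).
Proof.
rewrite /lucas_shift; case: (ltngtP m.+1 a) => h.
- have [-> [-> ->]] : (m.+2 - a = 0 /\ m.+1 - a = 0 /\ m - a = 0)%N by lia.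
  by rewrite lucas_seq0; ring.
- have [-> ->] : (m.+2 - a = (m - a).+2 /\ m.+1 - a = (m - a).+1)%N by lia.
  by rewrite lucas_seqSS; ring.
- have [-> [-> ->]] : (m.+2 - a = 1 /\ m.+1 - a = 0 /\ m - a = 0)%N by lia.
  by rewrite lucas_seq0 lucas_seq1; ring.
Qed.

Definition impulse2 (x y : R) (a b n : nat) : R :=
  (if n == a then x else 0) + (if n == b then y else 0).

Definition lucas_sol (x y : R) (a b n : nat) : R :=
  U n - x * lucas_shift a n - y * lucas_shift b n.

Lemma lucas_sol_rec x y a b m : lucas_sol x y a b m.+2 =
  e * lucas_sol x y a b m.+1 + t * lucas_sol x y a b m - impulse2 x y a b m.+1.
Proof.
rewrite /lucas_sol !lucas_shift_rec lucas_seqSS /impulse2.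
by case: (m.+1 == a); case: (m.+1 == b); ring.
Qed.

Lemma lucas_sol0 x y a b : lucas_sol x y a b 0 = 0.
Proof. by rewrite /lucas_sol /lucas_shift !sub0n lucas_seq0; ring. Qed.

Lemma lucas_sol1 x y a b : (0 < a)%N -> (0 < b)%N -> lucas_sol x y a b 1 = 1.
Proof.
move=> ha hb; rewrite /lucas_sol /lucas_shift.
have [-> ->] : (1 - a = 0 /\ 1 - b = 0)%N by lia.
by rewrite lucas_seq0 lucas_seq1; ring.
Qed.

Lemma lucas_sol_eventually0 x a b : (a < b)%N -> x * U (b - a) = U b ->
  forall n, (b <= n)%N -> lucas_sol x (U b.+1 - x * U (b - a).+1) a b n = 0.
Proof.
move=> hab hx; apply: linrec2_eq0.
- move=> m hm; rewrite lucas_sol_rec /impulse2 !ifN_eq ?addr0 ?subr0 //.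
  + by apply/eqP; lia.
  + by apply/eqP; lia.
- by rewrite /lucas_sol /lucas_shift subnn hx lucas_seq0; ring.
- rewrite /lucas_sol /lucas_shift subSnn (_ : b.+1 - a = (b - a).+1)%N; last lia.
  by rewrite lucas_seq1; ring.
Qed.

End LucasSequence.

Lemma lucas_seq_opp (R : comPzRingType) (e t : R) n :
  lucas_seq (- e) t n = (-1) ^+ n.+1 * lucas_seq e t n.
Proof.
suff: lucas_seq (- e) t n = (-1) ^+ n.+1 * lucas_seq e t n /\
      lucas_seq (- e) t n.+1 = (-1) ^+ n.+2 * lucas_seq e t n.+1 by case.
elim: n => [|n [H1 H2]]; first by rewrite mulr0 expr2 mulN1r opprK mulr1.
by split=> //; rewrite !lucas_seqSS H1 H2 !exprS; ring.
Qed.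

Section LucasIdomain.

Variables (R : idomainType) (e t : R).
Hypothesis t_neq0 : t != 0.
Hypothesis lucas_seq_neq0 : forall n, (0 < n)%N -> lucas_seq e t n != 0.

Local Notation U := (lucas_seq e t).

Lemma lucas_shift_indep a b X Y N : (0 < a)%N -> (a < b)%N ->
  (forall n, (N <= n)%N -> X * lucas_shift e t a n + Y * lucas_shift e t b n = 0) ->
  X = 0 /\ Y = 0.
Proof.
move=> ha hab H; set d := (b - a)%N; set m := N.+1.
have h1 := H (m + b)%N (ltac:(lia)); have h2 := H (m.+1 + b)%N (ltac:(lia)).
rewrite /lucas_shift in h1 h2.
have [E1 E2] : (m + b - a = m + d /\ m + b - b = m)%N by lia.
have [E3 E4] : (m.+1 + b - a = (m + d).+1 /\ m.+1 + b - b = m.+1)%N by lia.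
rewrite E1 E2 in h1; rewrite E3 E4 in h2.
(* Eliminating Y between the two equations produces the Casoratian of U and U(. + d). *)
have hX : X * (- (- t) ^+ m * U d) = 0.
  rewrite -(lucas_seq_casoratian e t d m) (addnC d m).
  transitivity ((X * U (m + d).+1 + Y * U m.+1) * U m
                 - (X * U (m + d) + Y * U m) * U m.+1); first ring.
  by rewrite h1 h2; ring.
have X0 : X = 0.
  apply/eqP; move/eqP: hX; rewrite mulf_eq0 => /orP[//|].
  rewrite mulf_eq0 oppr_eq0 expf_eq0 oppr_eq0 (negbTE t_neq0) andbF /=.
  by rewrite (negbTE (lucas_seq_neq0 _)) // subn_gt0.
split=> //; move/eqP: h1; rewrite X0 mul0r add0r mulf_eq0.
by rewrite (negbTE (lucas_seq_neq0 (ltn0Sn N))) orbF => /eqP.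
Qed.

Lemma lucas_sol_coef_neq0 x a b : (0 < a)%N -> (a < b)%N -> x * U (b - a) = U b ->
  x != 0 /\ U b.+1 - x * U (b - a).+1 != 0.
Proof.
move=> ha hab hx; set d := (b - a)%N.
have d0 : (0 < d)%N by rewrite subn_gt0.
split.
  by apply: contra_neq (lucas_seq_neq0 (ltn_trans ha hab)) => x0; rewrite -hx x0 mul0r.
have hy : (U b.+1 - x * U d.+1) * U d = - (- t) ^+ d * U a.
  by rewrite -lucas_seq_casoratian subnKC ?(ltnW hab) // -hx; ring.
apply: contra_neq (lucas_seq_neq0 ha) => y0; move: hy; rewrite y0 mul0r.
move/esym/eqP; rewrite mulf_eq0 oppr_eq0 expf_eq0 oppr_eq0 (negbTE t_neq0) andbF.
by move/eqP.
Qed.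

End LucasIdomain.

Lemma lucas_seq_gt0 (R : realDomainType) (e t : R) n :
  0 < e -> 0 <= t -> 0 < lucas_seq e t n.+1.
Proof.
move=> he ht; suff: 0 <= lucas_seq e t n /\ 0 < lucas_seq e t n.+1 by case.
elim: n => [|n [H1 H2]] //; split; first exact: ltW.
by rewrite lucas_seqSS; apply: ltr_pwDl; [apply: mulr_gt0 | apply: mulr_ge0].
Qed.

Lemma lucas_seq_dvd_mul (e t : int) d k : (lucas_seq e t d %| lucas_seq e t (k * d))%Z.
Proof.
elim: k => [|k IH]; first by rewrite mul0n dvdz0.
case: d IH => [|d] IH; first by rewrite muln0 dvdzz.
rewrite mulSn addnC addnS lucas_seqD.
by apply: rpredD; [exact: dvdz_mull | apply: dvdz_mulr; exact: dvdz_mull].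
Qed.

Definition lucas_c1 (anti : bool) (s : nat) : int := if anti then - s%:Z else s%:Z.

Lemma lucas_seq_c1_neq0 anti s (t : nat) n : (0 < s)%N -> (0 < n)%N ->
  lucas_seq (lucas_c1 anti s) t%:Z n != 0.
Proof.
move=> hs; case: n => // n _.
have hp : 0 < lucas_seq s%:Z t%:Z n.+1 by apply: lucas_seq_gt0; rewrite ?ltz_nat.
case: anti; rewrite /lucas_c1; last by rewrite gt_eqF.
by rewrite lucas_seq_opp mulf_neq0 ?signr_eq0 ?gt_eqF.
Qed.

Lemma C_union n R S : C n (rod_union R S) = C n R + C n S.
Proof. by rewrite /C /= !PoszD; ring. Qed.

Lemma C_bar n Q : C n (rod_bar Q) = - C n Q.
Proof. by rewrite /C /= opprB. Qed.

Lemma C_prod n Q R : C n (rod_prod Q R) = \sum_(1 <= i < n) C i Q * C (n - i) R.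
Proof.
rewrite /C /= -!natz !natr_sum -sumrB; apply: eq_bigr => i _.
by rewrite -!natz !natrD !natrM; ring.
Qed.

Lemma C_lucas anti s t n : C n (lucas anti s t) =
  if n == 1%N then lucas_c1 anti s else if n == 2%N then t%:Z else 0.
Proof.
by rewrite /C /lucas /lucas_c1; case: anti; case: n => [|[|[|n]]] //=; rewrite ?subr0 ?sub0r.
Qed.

Definition rod_of_counts (g : nat -> int) : rodset :=
  RodSet (fun n => if 0 <= g n then `|g n|%N else 0%N)
         (fun n => if 0 <= g n then 0%N else `|g n|%N).

Lemma C_rod_of_counts g n : C n (rod_of_counts g) = g n.
Proof.
rewrite /C /=; case: ifP => h; first by rewrite subr0 gez0_abs.
by rewrite sub0r ltz0_abs ?opprK // ltNge h.
Qed.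

(* The coefficients of x (1 + Q(x)), where Q(x) is the generating series of C(., Q). *)
Definition rod_series (Q : rodset) (n : nat) : int :=
  match n with 0%N => 0 | 1%N => 1 | k.+2 => C k.+1 Q end.

Lemma rod_series_rod_of_counts g n :
  rod_series (rod_of_counts (fun k => g k.+1)) n = if (n <= 1)%N then n%:Z else g n.
Proof. by case: n => [|[|n]] //=; rewrite C_rod_of_counts. Qed.

Lemma C_step_lucas anti s t Q m :
  C m.+1 (rod_union (rod_union (lucas anti s t) (rod_bar Q)) (rod_prod Q (lucas anti s t)))
  = lucas_c1 anti s * rod_series Q m.+1 + t%:Z * rod_series Q m - rod_series Q m.+2.
Proof.
rewrite !C_union C_bar C_prod.
case: m => [|[|m]]; first by rewrite big_geq // C_lucas /=; ring.
  by rewrite big_nat1 !C_lucas /=; ring.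
rewrite big_nat_recr //= big_nat_recr //= big_nat_cond big1 => [|i].
  have [-> ->] : (m.+3 - m.+1 = 2 /\ m.+3 - m.+2 = 1)%N by lia.
  by rewrite !C_lucas /=; ring.
by case/andP=> /andP[_ hi] _; rewrite C_lucas !ifN_eq ?mulr0 //; lia.
Qed.

Lemma rod_step_lucasE anti s t Q S : rod_step (lucas anti s t) Q S <->
  forall m, C m.+1 S =
    lucas_c1 anti s * rod_series Q m.+1 + t%:Z * rod_series Q m - rod_series Q m.+2.
Proof.
split=> [H m|H [|m] _] //; last by rewrite C_step_lucas.
by rewrite -C_step_lucas; apply: H.
Qed.

Lemma C_shape2 S a b : has_shape2 S a b -> a != b ->
  forall n, (0 < n)%N -> C n S = impulse2 (C a S) (C b S) a b n.
Proof.
move=> hS hab n hn; rewrite /impulse2.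
case: eqP => [->|na]; first by rewrite (negbTE hab) addr0.
case: eqP => [->|nb]; first by rewrite add0r.
by rewrite addr0; case: (C n S =P 0) => // /(hS n hn).1 [].
Qed.

Section RodStepShape2.

Variables (anti : bool) (s t a b : nat).
Hypotheses (s_gt0 : (0 < s)%N) (t_gt0 : (0 < t)%N) (a_gt0 : (0 < a)%N) (lt_ab : (a < b)%N).

Local Notation e := (lucas_c1 anti s).
Local Notation U := (lucas_seq e t%:Z).
Local Notation sol x y := (lucas_sol e t%:Z x y a b).

Let tZ_neq0 : t%:Z != 0.
Proof. by apply/eqP; lia. Qed.

Let U_neq0 n : (0 < n)%N -> U n != 0.
Proof. exact: lucas_seq_c1_neq0. Qed.

Lemma rod_series_step_shape2 Q S : has_shape2 S a b ->
  rod_step (lucas anti s t) Q S -> forall n, rod_series Q n = sol (C a S) (C b S) n.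
Proof.
move=> hS /rod_step_lucasE hQ n; apply/eqP; rewrite -subr_eq0; apply/eqP.
apply: (@linrec2_eq0 _ e t%:Z (fun n => rod_series Q n - sol (C a S) (C b S) n) 0) => //.
- by move=> m _; rewrite /= lucas_sol_rec -C_shape2 ?ltn_eqF // hQ; ring.
- by rewrite lucas_sol0 subrr.
- by rewrite lucas_sol1 ?subrr // (ltn_trans a_gt0 lt_ab).
Qed.

Lemma rod_step_shape2_eventually0 Q S : rod_finite Q -> has_shape2 S a b ->
  rod_step (lucas anti s t) Q S -> exists N, forall n, (N <= n)%N -> sol (C a S) (C b S) n = 0.
Proof.
move=> [N hN] hS hQ; exists N.+2 => -[|[|n]] hn //.
by rewrite -(rod_series_step_shape2 hS hQ); apply: hN.
Qed.

Lemma rod_step_shape2_uniq Q1 S1 Q2 S2 :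
  rod_finite Q1 -> has_shape2 S1 a b -> rod_step (lucas anti s t) Q1 S1 ->
  rod_finite Q2 -> has_shape2 S2 a b -> rod_step (lucas anti s t) Q2 S2 ->
  rod_equiv S1 S2.
Proof.
move=> f1 hS1 st1 f2 hS2 st2.
have [N1 H1] := rod_step_shape2_eventually0 f1 hS1 st1.
have [N2 H2] := rod_step_shape2_eventually0 f2 hS2 st2.
have [Xa Xb] : C a S2 - C a S1 = 0 /\ C b S2 - C b S1 = 0.
  apply: (lucas_shift_indep tZ_neq0 U_neq0 a_gt0 lt_ab (N := N1 + N2)) => n hn.
  have [e1 e2] : sol (C a S1) (C b S1) n = 0 /\ sol (C a S2) (C b S2) n = 0.
    by split; [apply: H1 | apply: H2]; lia.
  transitivity (sol (C a S1) (C b S1) n - sol (C a S2) (C b S2) n).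
    by rewrite /lucas_sol; ring.
  by rewrite e1 e2 subrr.
have hab : a != b by rewrite ltn_eqF.
move=> n hn; rewrite (C_shape2 hS1 hab hn) (C_shape2 hS2 hab hn).
by rewrite (subr0_eq Xa) (subr0_eq Xb).
Qed.

Lemma rod_step_shape2_exists : (U (b - a) %| U b)%Z ->
  exists Q S, rod_finite Q /\ has_shape2 S a b /\ rod_step (lucas anti s t) Q S.
Proof.
move=> hdvd; set x := (U b %/ U (b - a))%Z; set y := U b.+1 - x * U (b - a).+1.
have hx : x * U (b - a) = U b := divzK hdvd.
have [x0 y0] := lucas_sol_coef_neq0 tZ_neq0 U_neq0 a_gt0 lt_ab hx.
have sol_end : forall n, (b <= n)%N -> sol x y n = 0 := lucas_sol_eventually0 lt_ab hx.
exists (rod_of_counts (fun n => sol x y n.+1)), (rod_of_counts (impulse2 x y a b)).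
have series_sol n : rod_series (rod_of_counts (fun k => sol x y k.+1)) n = sol x y n.
  rewrite rod_series_rod_of_counts; case: n => [|[|n]] //.
  - by rewrite lucas_sol0.
  - by rewrite lucas_sol1 // (ltn_trans a_gt0 lt_ab).
split; [|split].
- by exists b => n hn; rewrite C_rod_of_counts sol_end //; lia.
- move=> n _; rewrite C_rod_of_counts /impulse2.
  case: (n =P a) => [->|na]; first by rewrite ltn_eqF // addr0; split=> _; [left | apply/eqP].
  case: (n =P b) => [->|nb]; first by rewrite add0r; split=> _; [right | apply/eqP].
  by rewrite addr0; split=> // -[].
- by apply/rod_step_lucasE => m; rewrite C_rod_of_counts !series_sol lucas_sol_rec; ring.
Qed.

End RodStepShape2.

Local Close Scope ring_scope.

Theorem mainTheorem18 (anti : bool) (s t : nat) :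
  (0 < s)%N -> (0 < t)%N -> coprime s t ->
  forall a b : nat,
    ((1 <= a)%N /\ b = a.+1)
    \/ ((1 <= a)%N /\ b = a.+2 /\ (s = 1%N \/ ~~ odd a))
    \/ (exists d k : nat, (3 <= d)%N /\ (1 <= k)%N /\ a = (k * d)%N /\ b = (k.+1 * d)%N) ->
  (exists Q S : rodset, rod_finite Q /\ has_shape2 S a b /\ rod_step (lucas anti s t) Q S)
  /\ (forall Q1 S1 Q2 S2 : rodset,
        rod_finite Q1 -> has_shape2 S1 a b -> rod_step (lucas anti s t) Q1 S1 ->
        rod_finite Q2 -> has_shape2 S2 a b -> rod_step (lucas anti s t) Q2 S2 ->
        rod_equiv S1 S2).
Proof.
move=> hs ht _ a b hab.
suff [ha lt_ab hdvd] : [/\ (0 < a)%N, (a < b)%N &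
    (lucas_seq (lucas_c1 anti s) t%:Z (b - a) %| lucas_seq (lucas_c1 anti s) t%:Z b)%Z].
  by split; [exact: rod_step_shape2_exists | exact: rod_step_shape2_uniq].
case: hab => [[ha ->]|[[ha [-> s1_or_even]]|[d [k [hd [hk [-> ->]]]]]]].
- by rewrite subSnn dvd1z.
- split=> //; rewrite (_ : a.+2 - a = 2)%N; last lia.
  case: s1_or_even => [s1|a_even].
    have -> : lucas_seq (lucas_c1 anti s) t%:Z 2 = lucas_c1 anti s.
      by rewrite lucas_seqSS lucas_seq1 lucas_seq0 mulr1 mulr0 addr0.
    by rewrite s1 /lucas_c1; case: anti; rewrite ?dvdNz dvd1z.
  have -> : a.+2 = ((a./2).+1 * 2)%N.
    by move: (odd_double_half a); rewrite (negbTE a_even) -muln2; lia.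
  exact: lucas_seq_dvd_mul.
- split; [nia | nia |]; rewrite mulSn addnK -mulSn; exact: lucas_seq_dvd_mul.
Qed.
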